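(* Let $d\ge 5$, let $q_1,\ldots,q_d$ be nonzero real numbers with $|q_i|\ge e^e$, and let $P$ be the parameter defined below. Let $\psi$ be a smooth symmetric probability density on $\mathbb{R}$ supported in $[-1,1]$, and let $K = \widehat{\psi}$ be its (real-valued, symmetric) Fourier transform. Suppose that the inequality $|q_1 m_1^2 + \cdots + q_d m_d^2| < 1$ has no solution in integers $m_1,\ldots,m_d$, not all zero, satisfying $|q_1| m_1^2 + \cdots + |q_d| m_d^2 \le 4 d^3 P^2$. Then $$\operatorname{Re} \int_0^\infty S_1(\alpha)\cdots S_d(\alpha) K(\alpha)\, \mathrm{d}\alpha = 0.$$
   Context: Notation: $e(x) = \exp(2\pi i x)$; $\widehat{\psi}(\alpha) = \int_{\mathbb{R}} \psi(x) e(-\alpha x)\,\mathrm{d}x$. For $j=1,\ldots,d$, $S_j(\alpha) = \sum_{m \in \mathbb{Z},\ P < |q_j|^{1/2} m < 2dP} e(\alpha q_j m^2)$. The parameter $P$ is $P = \exp\{(1 + \tfrac{10 d^2}{\log\log H})\log H\}$ with $H = C_d\, q^{\frac12 + \beta}$, where $q = \max_j |q_j|$, $C_d \ge 1$ is a constant depending on $d$, and $\beta$ is the exponent attached to the signature $(r,s)$ of $(q_1,\ldots,q_d)$ ($r$ positive, $s$ negative entries, $r,s\ge1$): with $r'=\max(r,s)$, $s'=\min(r,s)$, $\beta = \frac{r'}{2s'}$ if $r'\ge s'+3$, $\beta=\frac{s'+2}{2(s'-1)}$ if $r'\in\{s'+1,s'+2\}$, $\beta = \frac{s'+1}{2(s'-2)}$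 if $r'=s'$. *)

From Stdlib Require Import Reals List ZArith.
From Coquelicot Require Import Coquelicot.
Open Scope R_scope.

Definition rsum (d : nat) (f : nat -> R) : R :=
  fold_right Rplus 0 (map f (seq 0 d)).
Definition cprod (d : nat) (f : nat -> C) : C :=
  fold_right Cmult (RtoC 1) (map f (seq 0 d)).

Definition ee (x : R) : C := (cos (2 * PI * x), sin (2 * PI * x)).

Definition fourier (psi : R -> R) (a : R) : C :=
  @RInt_gen C_R_CompleteNormedModule (fun x => Cmult (RtoC (psi x)) (ee (- a * x)))
           (Rbar_locally m_infty) (Rbar_locally p_infty).

Definition qmax (d : nat) (q : nat -> R) : R :=
  fold_right Rmax 0 (map (fun j => Rabs (q j)) (seq 0 d)).

Definition npos (d : nat) (q : nat -> R) : nat :=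
  length (filter (fun j => if Rlt_dec 0 (q j) then true else false) (seq 0 d)).
Definition nneg (d : nat) (q : nat -> R) : nat :=
  length (filter (fun j => if Rlt_dec (q j) 0 then true else false) (seq 0 d)).

Definition beta_sig (r s : nat) : R :=
  let r' := Nat.max r s in let s' := Nat.min r s in
  if Nat.leb (s' + 3) r' then INR r' / (2 * INR s')
  else if Nat.eqb r' s' then (INR s' + 1) / (2 * (INR s' - 2))
  else (INR s' + 2) / (2 * (INR s' - 1)).

Definition Hpar (d : nat) (Cd : R) (q : nat -> R) : R :=
  Cd * Rpower (qmax d q) (/ 2 + beta_sig (npos d q) (nneg d q)).

Definition Ppar (d : nat) (Cd : R) (q : nat -> R) : R :=
  let H := Hpar d Cd q in
  exp ((1 + 10 * INR d ^ 2 / ln (ln H)) * ln H).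

Definition zsum (M : nat) (f : Z -> C) : C :=
  fold_right Cplus (RtoC 0)
    (map (fun k => f (Z.of_nat k - Z.of_nat M)%Z) (seq 0 (2 * M + 1))).

(* S_j(a) = sum_{m in Z, P < |q_j|^(1/2) m < 2 d P} e(a q_j m^2).
   Since |q_j| >= 1, every such m satisfies |m| < 2dP, so summing over
   |m| <= up(2dP) covers the whole (finite) range. *)
Definition Sj (d : nat) (P : R) (qj : R) (a : R) : C :=
  zsum (Z.to_nat (up (2 * INR d * P)))
    (fun m => if Rlt_dec P (sqrt (Rabs qj) * IZR m) then
                if Rlt_dec (sqrt (Rabs qj) * IZR m) (2 * INR d * P)
                then ee (a * qj * IZR m ^ 2) else RtoC 0
              else RtoC 0).

(* Expanding the product, S_1 ... S_d is a finite sum of e(a Q(m)) over the m with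
   P < |q_j|^(1/2) m_j < 2dP.  On that box the hypothesis forces |Q(m)| >= 1, so psi
   vanishes at every frequency v = Q(m).  For one such v, Hadamard's lemma writes
   psi(x) = (x - v) g(x) with g smooth, and then
     Re int_0^T e(a v) K(a) da = int psi(x) sin(2 pi T (x - v)) / (2 pi (x - v)) dx
                               = (1 / 2 pi) int g(x) sin(2 pi T (x - v)) dx,
   which is O(1/T) by one integration by parts (Riemann-Lebesgue).  The imaginary part
   converges as well, so the improper integral exists and is purely imaginary. *)

From Stdlib Require Import Reals List ZArith.
From Coquelicot Require Import Coquelicot.
From Stdlib Require Import Lra Lia FunctionalExtensionality.
Open Scope R_scope.

Lemma continuity_pt_of_continuous (f : R -> R) x : continuous f x -> continuity_pt f x.
Proof. intro H. now apply continuity_pt_filterlim. Qed.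

Lemma continuous_of_is_derive (f : R -> R) (x df : R) : is_derive f x df -> continuous f x.
Proof. intro H. apply (ex_derive_continuous (V := R_NormedModule)). now exists df. Qed.

Lemma continuity_2d_pt_continuous_r (h : R -> R -> R) u x :
  continuity_2d_pt h u x -> continuous (h u) x.
Proof.
  intro H. apply continuity_pt_filterlim. intros eps Heps.
  destruct (H (mkposreal eps Heps)) as [delta Hdelta].
  exists delta. split; [apply cond_pos|].
  intros y [_ Hy]. apply Hdelta; [|exact Hy].
  rewrite Rminus_eq_0, Rabs_R0. apply cond_pos.
Qed.

Lemma is_derive_RInt_param_cont (h dh : R -> R -> R) (a b T : R) :
  (forall u x, is_derive (fun u => h u x) u (dh u x)) ->
  (forall u x, continuity_2d_pt dh u x) ->
  (forall u x, continuity_2d_pt h u x) ->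
  is_derive (fun u => RInt (h u) a b) T (RInt (dh T) a b).
Proof.
  intros Hd Hdc Hc.
  assert (HD : forall u x, Derive (fun z => h z x) u = dh u x)
    by (intros; now apply is_derive_unique).
  rewrite <- (RInt_ext (fun x => Derive (fun u => h u x) T)) by (intros; apply HD).
  apply is_derive_RInt_param.
  - apply filter_forall. intros u x _. now exists (dh u x).
  - intros x _. apply (continuity_2d_pt_ext dh); [intros; now rewrite HD | apply Hdc].
  - apply filter_forall. intro u.
    apply (ex_RInt_continuous (V := R_CompleteNormedModule)). intros x _.
    now apply continuity_2d_pt_continuous_r.
Qed.

Lemma bounded_on_segment (f : R -> R) a b : a <= b -> (forall x, continuous f x) ->
  exists M, forall x, a <= x <= b -> Rabs (f x) <= M.
Proof.
  intros Hab Hc.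
  destruct (continuity_ab_maj (fun x => Rabs (f x)) a b Hab) as [x0 [Hx0 _]].
  - intros x _. apply (continuity_pt_comp f Rabs); [|apply Rcontinuity_abs].
    now apply continuity_pt_of_continuous.
  - now exists (Rabs (f x0)).
Qed.

Lemma RInt_scal_R (f : R -> R) k a b :
  ex_RInt f a b -> RInt (fun x => k * f x) a b = k * RInt f a b.
Proof. intro H. exact (RInt_scal (V := R_CompleteNormedModule) f a b k H). Qed.

Lemma continuous_mul_cos_affine (f : R -> R) c phi x :
  continuous f x -> continuous (fun x => f x * cos (c * x + phi)) x.
Proof.
  intro Hf. apply (continuous_mult (K := R_AbsRing)); [exact Hf|].
  apply (continuous_of_is_derive _ _ (- sin (c * x + phi) * c)). auto_derive; auto; ring.
Qed.

Lemma continuous_mul_sin_affine (f : R -> R) c phi x :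
  continuous f x -> continuous (fun x => f x * sin (c * x + phi)) x.
Proof.
  intro Hf. apply (continuous_mult (K := R_AbsRing)); [exact Hf|].
  apply (continuous_of_is_derive _ _ (cos (c * x + phi) * c)). auto_derive; auto; ring.
Qed.

Lemma RInt_mul_cos_by_parts (g g' : R -> R) (a b c phi : R) :
  (forall x, is_derive g x (g' x)) -> (forall x, continuous g' x) ->
  c * RInt (fun x => g x * cos (c * x + phi)) a b =
  g b * sin (c * b + phi) - g a * sin (c * a + phi) - RInt (fun x => g' x * sin (c * x + phi)) a b.
Proof.
  intros Hg Hg'.
  assert (Hgc : forall x, continuous g x)
    by (intro x; exact (continuous_of_is_derive _ _ _ (Hg x))).
  assert (HFTC : is_RInt (fun x => g' x * sin (c * x + phi) + c * (g x * cos (c * x + phi))) a b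
                   (g b * sin (c * b + phi) - g a * sin (c * a + phi))).
  { apply (is_RInt_derive (V := R_CompleteNormedModule) (fun x => g x * sin (c * x + phi))).
    - intros y _. auto_derive; [now exists (g' y)|].
      replace (Derive (fun x => g x) y) with (g' y) by (symmetry; now apply is_derive_unique).
      ring.
    - intros x _. apply (continuous_plus (V := R_NormedModule)).
      + now apply continuous_mul_sin_affine.
      + apply (continuous_mult (K := R_AbsRing)); [apply continuous_const|].
        now apply continuous_mul_cos_affine. }
  assert (Hsum : RInt (fun x => g' x * sin (c * x + phi) + c * (g x * cos (c * x + phi))) a b =
                 RInt (fun x => g' x * sin (c * x + phi)) a b +
                 c * RInt (fun x => g x * cos (c * x + phi)) a b).
  { apply (is_RInt_unique (V := R_CompleteNormedModule)).
    apply (is_RInt_plus (V := R_NormedModule)); [|apply (is_RInt_scal (V := R_NormedModule))];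
      apply (RInt_correct (V := R_CompleteNormedModule)),
            (ex_RInt_continuous (V := R_CompleteNormedModule)); intros x _.
    - now apply continuous_mul_sin_affine.
    - now apply continuous_mul_cos_affine. }
  apply (is_RInt_unique (V := R_CompleteNormedModule)) in HFTC. lra.
Qed.

Lemma RInt_mul_cos_decay (g g' : R -> R) (a b : R) : a <= b ->
  (forall x, is_derive g x (g' x)) -> (forall x, continuous g' x) ->
  exists C, forall c phi, 0 < c ->
    Rabs (RInt (fun x => g x * cos (c * x + phi)) a b) <= C / c.
Proof.
  intros Hab Hg Hg'.
  assert (Hgc : forall x, continuous g x)
    by (intro x; exact (continuous_of_is_derive _ _ _ (Hg x))).
  destruct (bounded_on_segment g a b Hab Hgc) as [M1 HM1].
  destruct (bounded_on_segment g' a b Hab Hg') as [M2 HM2].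
  exists (2 * M1 + (b - a) * M2). intros c phi Hc.
  assert (Hsin : forall h M x, a <= x <= b -> Rabs (h x) <= M ->
                 Rabs (h x * sin (c * x + phi)) <= M).
  { intros h M x Hx HM. rewrite Rabs_mult, <- (Rmult_1_r M).
    apply Rmult_le_compat; try apply Rabs_pos; [exact HM | apply Rabs_le, SIN_bound]. }
  assert (HJ : Rabs (RInt (fun x => g' x * sin (c * x + phi)) a b) <= (b - a) * M2).
  { apply abs_RInt_le_const; [exact Hab| |].
    - apply (ex_RInt_continuous (V := R_CompleteNormedModule)). intros x _.
      now apply continuous_mul_sin_affine.
    - intros x Hx. apply Hsin; [exact Hx | now apply HM2]. }
  pose proof (Hsin g M1 a (conj (Rle_refl a) Hab) (HM1 a (conj (Rle_refl a) Hab))).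
  pose proof (Hsin g M1 b (conj Hab (Rle_refl b)) (HM1 b (conj Hab (Rle_refl b)))).
  apply (Rmult_le_reg_l c); [exact Hc|].
  replace (c * ((2 * M1 + (b - a) * M2) / c)) with (2 * M1 + (b - a) * M2) by (field; lra).
  rewrite <- (Rabs_pos_eq c) at 1 by lra.
  rewrite <- Rabs_mult, (RInt_mul_cos_by_parts g g' a b c phi Hg Hg').
  unfold Rminus. eapply Rle_trans; [apply Rabs_triang|]. rewrite Rabs_Ropp.
  eapply Rle_trans; [apply Rplus_le_compat_r, Rabs_triang|]. rewrite Rabs_Ropp. lra.
Qed.

Lemma is_RInt_zero_on {V : NormedModule R_AbsRing} (f : R -> V) a b :
  (forall x, Rmin a b < x < Rmax a b -> f x = zero) -> is_RInt f a b zero.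
Proof.
  intro Hf. apply (is_RInt_ext (fun _ => zero)); [intros x Hx; symmetry; now apply Hf|].
  pose proof (is_RInt_const (V := V) a b zero) as H. now rewrite (@scal_zero_r _ V) in H.
Qed.

Lemma is_RInt_gen_of_support {V : NormedModule R_AbsRing} (f : R -> V) a b l :
  (forall x, x < a \/ b < x -> f x = zero) -> is_RInt f a b l ->
  is_RInt_gen f (Rbar_locally m_infty) (Rbar_locally p_infty) l.
Proof.
  intros Hf Hl P HP.
  apply (Filter_prod _ _ _ (fun x => x < a) (fun y => b < y)); [now exists a | now exists b|].
  intros x y Hx Hy. exists l. split; [|exact (locally_singleton _ _ HP)].
  assert (El : plus (plus zero l) zero = l) by now rewrite plus_zero_r, plus_zero_l.
  rewrite <- El.
  apply (is_RInt_Chasles f x b y); [apply (is_RInt_Chasles f x a b); [|exact Hl]|].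
  - apply is_RInt_zero_on. intros z Hz. apply Hf. left.
    rewrite Rmin_left, Rmax_right in Hz by lra. lra.
  - apply is_RInt_zero_on. intros z Hz. apply Hf. right.
    rewrite Rmin_left, Rmax_right in Hz by lra. lra.
Qed.

Lemma is_RInt_gen_pair {Fa Fb : (R -> Prop) -> Prop} {FFa : Filter Fa} {FFb : Filter Fb}
  (f g : R -> R) lf lg :
  is_RInt_gen f Fa Fb lf -> is_RInt_gen g Fa Fb lg ->
  is_RInt_gen (V := C_R_NormedModule) (fun x => ((f x, g x) : C)) Fa Fb ((lf, lg) : C).
Proof.
  intros Hf Hg P [eps HP].
  specialize (Hf (ball lf eps) (locally_ball lf eps)).
  specialize (Hg (ball lg eps) (locally_ball lg eps)).
  unfold filtermapi in Hf, Hg |- *.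
  refine (filter_imp _ _ _ (filter_and _ _ Hf Hg)).
  intros [a b] [[yf [Hyf Bf]] [yg [Hyg Bg]]].
  exists ((yf, yg) : C). split.
  - now apply (is_RInt_fct_extend_pair (U := R_NormedModule) (V := R_NormedModule)).
  - now apply HP.
Qed.

Lemma is_RInt_Cmult_l (f : R -> C) (z : C) a b l :
  is_RInt (V := C_R_NormedModule) f a b l ->
  is_RInt (V := C_R_NormedModule) (fun x => Cmult z (f x)) a b (Cmult z l).
Proof.
  intro Hl.
  pose proof (is_RInt_fct_extend_fst (U := R_NormedModule) (V := R_NormedModule) f a b l Hl) as H1.
  pose proof (is_RInt_fct_extend_snd (U := R_NormedModule) (V := R_NormedModule) f a b l Hl) as H2.
  apply (is_RInt_fct_extend_pair (U := R_NormedModule) (V := R_NormedModule)).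
  - apply (is_RInt_minus (V := R_NormedModule)); now apply (is_RInt_scal (V := R_NormedModule)).
  - apply (is_RInt_plus (V := R_NormedModule)); now apply (is_RInt_scal (V := R_NormedModule)).
Qed.

Lemma is_RInt_gen_zero {V : NormedModule R_AbsRing} {Fa Fb : (R -> Prop) -> Prop}
  {FFa : Filter Fa} {FFb : Filter Fb} :
  is_RInt_gen (fun _ => (zero : V)) Fa Fb zero.
Proof.
  intros P HP. unfold filtermapi. apply filter_forall. intros ab. exists zero. split.
  - now apply is_RInt_zero_on.
  - exact (locally_singleton _ _ HP).
Qed.

Lemma continuity_2d_pt_pow_r n u t : continuity_2d_pt (fun _ t => t ^ n) u t.
Proof.
  apply (continuity_1d_2d_pt_comp (fun t => t ^ n) (fun _ t => t)).
  - apply derivable_continuous_pt, derivable_pt_pow.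
  - apply continuity_2d_pt_id2.
Qed.

Ltac continuity_2d :=
  repeat first
    [ apply continuity_2d_pt_pow_r | apply continuity_2d_pt_mult | apply continuity_2d_pt_plus
    | apply continuity_2d_pt_minus | apply continuity_2d_pt_opp
    | apply continuity_2d_pt_const | apply continuity_2d_pt_id1
    | apply continuity_2d_pt_id2
    | apply (continuity_1d_2d_pt_comp cos); [apply continuity_cos|]
    | apply (continuity_1d_2d_pt_comp sin); [apply continuity_sin|]
    | match goal with
      | H : forall y, continuity_pt ?f y |- _ =>
          apply (continuity_1d_2d_pt_comp f); [apply H|]
      end ].

Lemma cos_add_PI2 x : cos (x + PI / 2) = - sin x.
Proof. rewrite cos_plus, cos_PI2, sin_PI2. ring. Qed.

Definition affine_moment (F : R -> R) (Q : R) (k : nat) (x : R) : R :=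
  RInt (fun t => t ^ k * F (Q + t * (x - Q))) 0 1.

Lemma is_derive_affine_moment (F F' : R -> R) Q k x :
  (forall y, is_derive F y (F' y)) -> (forall y, continuous F' y) ->
  is_derive (affine_moment F Q k) x (affine_moment F' Q (S k) x).
Proof.
  intros HF HF'.
  assert (HFc : forall y, continuity_pt F y)
    by (intro y; apply continuity_pt_of_continuous, (continuous_of_is_derive _ _ _ (HF y))).
  assert (HF'c : forall y, continuity_pt F' y) by (intro y; now apply continuity_pt_of_continuous).
  apply (is_derive_RInt_param_cont (fun u t => t ^ k * F (Q + t * (u - Q)))
                                   (fun u t => t ^ S k * F' (Q + t * (u - Q)))).
  - intros u t. auto_derive; [now exists (F' (Q + t * (u - Q)))|].
    rewrite (is_derive_unique (fun y => F y) _ _ (HF _)).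
    simpl. unfold Rminus. ring.
  - intros u t. continuity_2d.
  - intros u t. continuity_2d.
Qed.

Lemma Hadamard_division (F F' : R -> R) Q x :
  (forall y, is_derive F y (F' y)) -> (forall y, continuous F' y) ->
  F x - F Q = (x - Q) * affine_moment F' Q 0 x.
Proof.
  intros HF HF'.
  assert (HFTC : is_RInt (fun t => (x - Q) * (t ^ 0 * F' (Q + t * (x - Q)))) 0 1
                   (minus (F (Q + 1 * (x - Q))) (F (Q + 0 * (x - Q))))).
  { apply (is_RInt_derive (V := R_CompleteNormedModule) (fun t => F (Q + t * (x - Q)))).
    - intros t _. auto_derive; [now exists (F' (Q + t * (x - Q)))|].
      rewrite (is_derive_unique (fun y => F y) _ _ (HF _)).
      simpl. unfold Rminus. ring.
    - intros t _. apply (continuous_mult (K := R_AbsRing)); [apply continuous_const|].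
      apply (continuous_mult (K := R_AbsRing)); [apply continuous_const|].
      apply (continuous_comp (fun t => Q + t * (x - Q)) F'); [|apply HF'].
      apply (continuous_of_is_derive _ _ (x - Q)). auto_derive; auto; ring. }
  replace (Q + 1 * (x - Q)) with x in HFTC by ring.
  replace (Q + 0 * (x - Q)) with Q in HFTC by ring.
  change (minus (F x) (F Q)) with (F x - F Q) in HFTC.
  apply (is_RInt_unique (V := R_CompleteNormedModule)) in HFTC.
  unfold affine_moment. rewrite <- HFTC.
  apply RInt_scal_R.
  apply (ex_RInt_continuous (V := R_CompleteNormedModule)). intros t _.
  apply (continuity_2d_pt_continuous_r (fun _ t => t ^ 0 * F' (Q + t * (x - Q))) 0).
  assert (HF'c : forall y, continuity_pt F' y) by (intro y; now apply continuity_pt_of_continuous).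
  continuity_2d.
Qed.

Lemma smooth_division (psi : R -> R) Q :
  (forall n x, ex_derive_n psi n x) -> psi Q = 0 ->
  exists g g' : R -> R, (forall x, psi x = (x - Q) * g x) /\
    (forall x, is_derive g x (g' x)) /\ (forall x, continuous g' x).
Proof.
  intros Hd HQ.
  assert (HD : forall k x, is_derive (Derive_n psi k) x (Derive_n psi (S k) x))
    by (intros k x; apply Derive_correct, (Hd (S k))).
  assert (HDc : forall k x, continuous (Derive_n psi k) x)
    by (intros k x; exact (continuous_of_is_derive _ _ _ (HD k x))).
  exists (affine_moment (Derive_n psi 1) Q 0), (affine_moment (Derive_n psi 2) Q 1).
  split; [|split].
  - intro x. rewrite <- (Rminus_0_r (psi x)), <- HQ at 1.
    exact (Hadamard_division (Derive_n psi 0) (Derive_n psi 1) Q x (HD 0%nat) (HDc 1%nat)).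
  - intro x. exact (is_derive_affine_moment _ _ Q 0 x (HD 1%nat) (HDc 2%nat)).
  - intro x. exact (continuous_of_is_derive _ _ _
                      (is_derive_affine_moment _ _ Q 1 x (HD 2%nat) (HDc 3%nat))).
Qed.

(* The phase [phi] absorbs sines: differentiating in [T] shifts it by [PI / 2], and
   [e(T Q) K(T)] has real and imaginary parts at phases [0] and [PI / 2]. *)
Definition cos_transform (h : R -> R) (Q phi T : R) : R :=
  RInt (fun x => h x * cos (2 * PI * T * (x - Q) + phi)) (-1) 1.

Lemma is_derive_cos_transform (h : R -> R) Q phi T : (forall x, continuous h x) ->
  is_derive (cos_transform h Q phi) T
    (2 * PI * cos_transform (fun x => (x - Q) * h x) Q (phi + PI / 2) T).
Proof.
  intro Hh.
  assert (Hhc : forall y, continuity_pt h y) by (intro y; now apply continuity_pt_of_continuous).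
  assert (Hex : ex_RInt (fun x => (x - Q) * h x * cos (2 * PI * T * (x - Q) + (phi + PI / 2)))
                        (-1) 1).
  { apply (ex_RInt_continuous (V := R_CompleteNormedModule)). intros x _.
    apply (continuity_2d_pt_continuous_r
             (fun u x => (x - Q) * h x * cos (2 * PI * u * (x - Q) + (phi + PI / 2))) T).
    continuity_2d. }
  unfold cos_transform.
  rewrite <- (RInt_scal_R _ (2 * PI) (-1) 1 Hex).
  apply (is_derive_RInt_param_cont (fun u x => h x * cos (2 * PI * u * (x - Q) + phi))
           (fun u x => 2 * PI * ((x - Q) * h x * cos (2 * PI * u * (x - Q) + (phi + PI / 2))))).
  - intros u x. auto_derive; [easy|].
    replace (2 * PI * u * (x - Q) + (phi + PI / 2)) with (2 * PI * u * (x - Q) + phi + PI / 2)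
      by ring.
    rewrite cos_add_PI2. ring.
  - intros u x. continuity_2d.
  - intros u x. continuity_2d.
Qed.

Lemma cos_transform_decay (g g' : R -> R) Q phi :
  (forall x, is_derive g x (g' x)) -> (forall x, continuous g' x) ->
  exists C, forall T, 0 < T -> Rabs (cos_transform g Q phi T) <= C / T.
Proof.
  intros Hg Hg'.
  destruct (RInt_mul_cos_decay g g' (-1) 1 ltac:(lra) Hg Hg') as [C HC].
  exists (C / (2 * PI)). intros T HT.
  pose proof PI_RGT_0.
  replace (C / (2 * PI) / T) with (C / (2 * PI * T)) by (field; lra).
  unfold cos_transform.
  rewrite (RInt_ext _ (fun x => g x * cos (2 * PI * T * x + (phi - 2 * PI * T * Q)))).
  - apply HC. nra.
  - intros x _. f_equal. f_equal. ring.
Qed.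

Lemma filterlim_zero_of_inv_bound (f : R -> R) C :
  (forall T, 0 < T -> Rabs (f T) <= C / T) ->
  filterlim f (Rbar_locally p_infty) (locally 0).
Proof.
  intros Hf P [eps HP].
  exists (Rabs C / eps). intros T HT.
  apply HP. change (Rabs (f T - 0) < eps). rewrite Rminus_0_r.
  pose proof (cond_pos eps).
  assert (HT0 : 0 < T)
    by (eapply Rle_lt_trans; [|exact HT]; apply Rdiv_le_0_compat; [apply Rabs_pos|lra]).
  eapply Rle_lt_trans; [exact (Hf T HT0)|].
  apply (Rmult_lt_reg_r T); [exact HT0|].
  replace (C / T * T) with C by (field; lra).
  apply (Rmult_lt_compat_l eps) in HT; [|lra].
  replace (eps * (Rabs C / eps)) with (Rabs C) in HT by (field; lra).
  pose proof (Rle_abs C). lra.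
Qed.

Lemma is_derive_cos_transform_quotient (h g : R -> R) Q phi T :
  (forall x, h x = (x - Q) * g x) -> (forall x, continuous g x) ->
  is_derive (fun T => / (2 * PI) * cos_transform g Q (phi - PI / 2) T) T (cos_transform h Q phi T).
Proof.
  intros Hh Hgc.
  pose proof (is_derive_cos_transform g Q (phi - PI / 2) T Hgc) as HD.
  replace (phi - PI / 2 + PI / 2) with phi in HD by ring.
  replace (fun x => (x - Q) * g x) with h in HD by (extensionality x; apply Hh).
  replace (cos_transform h Q phi T) with (/ (2 * PI) * (2 * PI * cos_transform h Q phi T))
    by (pose proof PI_RGT_0; field; lra).
  now apply is_derive_scal.
Qed.

Lemma is_RInt_gen_cos_transform (h g g' : R -> R) Q phi :
  (forall x, h x = (x - Q) * g x) ->
  (forall x, is_derive g x (g' x)) -> (forall x, continuous g' x) ->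
  is_RInt_gen (cos_transform h Q phi) (at_point 0) (Rbar_locally p_infty)
    (- cos_transform g Q (phi - PI / 2) 0 / (2 * PI)).
Proof.
  intros Hh Hg Hg'.
  pose proof PI_RGT_0 as Hpi.
  assert (Hgc : forall x, continuous g x)
    by (intro x; exact (continuous_of_is_derive _ _ _ (Hg x))).
  assert (Hhc : forall x, continuous h x).
  { intro x. apply (continuous_ext (fun x => (x - Q) * g x)); [intro; now rewrite Hh|].
    apply (continuous_mult (K := R_AbsRing)); [|apply Hgc].
    apply (continuous_of_is_derive _ _ 1). auto_derive; auto; ring. }
  set (G T := / (2 * PI) * cos_transform g Q (phi - PI / 2) T).
  assert (HG : forall T, is_derive G T (cos_transform h Q phi T))
    by (intro T; exact (is_derive_cos_transform_quotient h g Q phi T Hh Hgc)).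
  replace (- cos_transform g Q (phi - PI / 2) 0 / (2 * PI)) with (0 - G 0)
    by (unfold G, Rdiv; ring).
  replace (cos_transform h Q phi) with (Derive G)
    by (extensionality T; now apply is_derive_unique).
  apply is_RInt_gen_Derive.
  - apply filter_forall. intros ab x _. now exists (cos_transform h Q phi x).
  - apply filter_forall. intros ab x _.
    apply (continuous_ext (cos_transform h Q phi)); [intro; symmetry; now apply is_derive_unique|].
    exact (continuous_of_is_derive _ _ _ (is_derive_cos_transform h Q phi x Hhc)).
  - intros P HP. exact (locally_singleton _ _ HP).
  - destruct (cos_transform_decay g g' Q (phi - PI / 2) Hg Hg') as [C HC].
    apply (filterlim_zero_of_inv_bound _ (/ (2 * PI) * C)). intros T HT. unfold G.
    rewrite Rabs_mult, Rabs_pos_eq by (apply Rlt_le, Rinv_0_lt_compat; lra).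
    unfold Rdiv. rewrite Rmult_assoc.
    apply Rmult_le_compat_l; [apply Rlt_le, Rinv_0_lt_compat; lra | now apply HC].
Qed.

Lemma ee_add u w : ee (u + w) = Cmult (ee u) (ee w).
Proof.
  unfold ee, Cmult. cbn [fst snd].
  rewrite Rmult_plus_distr_l, cos_plus, sin_plus. f_equal; ring.
Qed.

Lemma ee_mul_fourier_integrand (p a Q x : R) :
  Cmult (ee (a * Q)) (Cmult (RtoC p) (ee (- a * x))) =
  ((p * cos (2 * PI * a * (x - Q) + 0), p * cos (2 * PI * a * (x - Q) + PI / 2)) : C).
Proof.
  rewrite Cmult_assoc, (Cmult_comm (ee (a * Q))), <- Cmult_assoc, <- ee_add.
  rewrite cos_add_PI2, Rplus_0_r.
  replace (2 * PI * a * (x - Q)) with (- (2 * PI * (a * Q + - a * x))) by ring.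
  rewrite cos_neg, sin_neg.
  unfold ee, Cmult, RtoC. cbn [fst snd]. f_equal; ring.
Qed.

Lemma RtoC_mul_ee_re p y : p * cos (2 * PI * y) = fst (Cmult (RtoC p) (ee y)).
Proof. unfold Cmult, RtoC, ee. cbn [fst snd]. ring. Qed.

Lemma RtoC_mul_ee_im p y : p * sin (2 * PI * y) = snd (Cmult (RtoC p) (ee y)).
Proof. unfold Cmult, RtoC, ee. cbn [fst snd]. ring. Qed.

Lemma is_RInt_fourier (psi : R -> R) a :
  (forall x, continuous psi x) -> (forall x, 1 < Rabs x -> psi x = 0) ->
  is_RInt (V := C_R_NormedModule) (fun x => Cmult (RtoC (psi x)) (ee (- a * x))) (-1) 1
    (fourier psi a).
Proof.
  intros Hc Hs.
  assert (Hpc : forall y, continuity_pt psi y) by (intro y; now apply continuity_pt_of_continuous).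
  assert (Hex : forall s, (forall y, continuity_pt s y) ->
                 ex_RInt (fun x => psi x * s (2 * PI * (- a * x))) (-1) 1).
  { intros s Hsc. apply (ex_RInt_continuous (V := R_CompleteNormedModule)). intros x _.
    apply (continuity_2d_pt_continuous_r (fun _ x => psi x * s (2 * PI * (- a * x))) 0).
    continuity_2d. }
  assert (Hl : is_RInt (V := C_R_NormedModule)
                 (fun x => Cmult (RtoC (psi x)) (ee (- a * x))) (-1) 1
                 ((RInt (fun x => psi x * cos (2 * PI * (- a * x))) (-1) 1,
                   RInt (fun x => psi x * sin (2 * PI * (- a * x))) (-1) 1) : C)).
  { apply (is_RInt_fct_extend_pair (U := R_NormedModule) (V := R_NormedModule)).
    - apply (is_RInt_ext (fun x => psi x * cos (2 * PI * (- a * x))));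
        [intros x _; apply RtoC_mul_ee_re|].
      apply (RInt_correct (V := R_CompleteNormedModule)), Hex, continuity_cos.
    - apply (is_RInt_ext (fun x => psi x * sin (2 * PI * (- a * x))));
        [intros x _; apply RtoC_mul_ee_im|].
      apply (RInt_correct (V := R_CompleteNormedModule)), Hex, continuity_sin. }
  assert (Hzero : forall x, x < -1 \/ 1 < x ->
                   Cmult (RtoC (psi x)) (ee (- a * x)) = zero).
  { intros x Hx. rewrite Hs by (destruct Hx; [rewrite Rabs_left | rewrite Rabs_right]; lra).
    unfold Cmult, RtoC. cbn [fst snd]. apply injective_projections; simpl; ring. }
  unfold fourier.
  now rewrite (is_RInt_gen_unique (V := C_R_CompleteNormedModule) _ _
                 (is_RInt_gen_of_support _ (-1) 1 _ Hzero Hl)).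
Qed.

Lemma ee_mul_fourier (psi : R -> R) Q a :
  (forall x, continuous psi x) -> (forall x, 1 < Rabs x -> psi x = 0) ->
  Cmult (ee (a * Q)) (fourier psi a) =
  ((cos_transform psi Q 0 a, cos_transform psi Q (PI / 2) a) : C).
Proof.
  intros Hc Hs.
  pose proof (is_RInt_Cmult_l _ (ee (a * Q)) _ _ _ (is_RInt_fourier psi a Hc Hs)) as H.
  apply injective_projections; cbn [fst snd]; symmetry;
    apply (is_RInt_unique (V := R_CompleteNormedModule)).
  - apply (is_RInt_ext _ _ _ _ _ (fun x _ => f_equal fst (ee_mul_fourier_integrand (psi x) a Q x))).
    exact (is_RInt_fct_extend_fst (U := R_NormedModule) (V := R_NormedModule) _ _ _ _ H).
  - apply (is_RInt_ext _ _ _ _ _ (fun x _ => f_equal snd (ee_mul_fourier_integrand (psi x) a Q x))).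
    exact (is_RInt_fct_extend_snd (U := R_NormedModule) (V := R_NormedModule) _ _ _ _ H).
Qed.

Lemma is_RInt_gen_ee_mul_fourier (psi : R -> R) Q :
  (forall n x, ex_derive_n psi n x) -> (forall x, 1 < Rabs x -> psi x = 0) -> psi Q = 0 ->
  exists y, is_RInt_gen (V := C_R_NormedModule)
              (fun a => Cmult (ee (a * Q)) (fourier psi a))
              (at_point 0) (Rbar_locally p_infty) ((0, y) : C).
Proof.
  intros Hd Hs HQ.
  destruct (smooth_division psi Q Hd HQ) as [g [g' [Hpsi [Hg Hg']]]].
  assert (Hre : cos_transform g Q (0 - PI / 2) 0 = 0).
  { unfold cos_transform. rewrite (RInt_ext _ (fun _ => 0)).
    - rewrite RInt_const. apply Rmult_0_r.
    - intros x _. replace (2 * PI * 0 * (x - Q) + (0 - PI / 2)) with (- (PI / 2)) by ring.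
      rewrite cos_neg, cos_PI2. apply Rmult_0_r. }
  exists (- cos_transform g Q (PI / 2 - PI / 2) 0 / (2 * PI)).
  replace (fun a => Cmult (ee (a * Q)) (fourier psi a))
    with (fun a => ((cos_transform psi Q 0 a, cos_transform psi Q (PI / 2) a) : C)).
  - apply is_RInt_gen_pair.
    + pose proof (is_RInt_gen_cos_transform psi g g' Q 0 Hpsi Hg Hg') as H.
      rewrite Hre in H. replace (- 0 / (2 * PI)) with 0 in H by (unfold Rdiv; ring).
      exact H.
    + exact (is_RInt_gen_cos_transform psi g g' Q (PI / 2) Hpsi Hg Hg').
  - extensionality a. symmetry. apply ee_mul_fourier; [|exact Hs].
    intro x. exact (continuous_of_is_derive _ _ _ (Derive_correct _ _ (Hd 1%nat x))).
Qed.

Definition expsum (L : list R) (a : R) : C :=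
  fold_right Cplus (RtoC 0) (map (fun v => ee (a * v)) L).

Lemma expsum_cons v L a : expsum (v :: L) a = Cplus (ee (a * v)) (expsum L a).
Proof. reflexivity. Qed.

Lemma expsum_app L1 L2 a : expsum (L1 ++ L2) a = Cplus (expsum L1 a) (expsum L2 a).
Proof.
  unfold expsum. induction L1 as [|x L1 IH]; simpl.
  - now rewrite Cplus_0_l.
  - now rewrite IH, Cplus_assoc.
Qed.

Lemma ee_mul_expsum x L a : Cmult (ee (a * x)) (expsum L a) = expsum (map (Rplus x) L) a.
Proof.
  unfold expsum. induction L as [|y L IH]; simpl.
  - apply Cmult_0_r.
  - now rewrite Cmult_plus_distr_l, IH, Rmult_plus_distr_l, ee_add.
Qed.

Lemma expsum_mul L1 L2 a :
  Cmult (expsum L1 a) (expsum L2 a) = expsum (flat_map (fun x => map (Rplus x) L2) L1) a.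
Proof.
  induction L1 as [|x L1 IH]; simpl.
  - apply Cmult_0_l.
  - rewrite expsum_app, <- IH, <- ee_mul_expsum.
    unfold expsum at 1. simpl. apply Cmult_plus_distr_r.
Qed.

Lemma is_RInt_gen_expsum_mul_fourier (psi : R -> R) L :
  (forall n x, ex_derive_n psi n x) -> (forall x, 1 < Rabs x -> psi x = 0) ->
  (forall v, In v L -> psi v = 0) ->
  exists y, is_RInt_gen (V := C_R_NormedModule)
              (fun a => Cmult (expsum L a) (fourier psi a))
              (at_point 0) (Rbar_locally p_infty) ((0, y) : C).
Proof.
  intros Hd Hs. induction L as [|v L IH]; intro HL.
  - exists 0.
    replace (fun a => Cmult (expsum nil a) (fourier psi a)) with (fun _ : R => (zero : C))
      by (extensionality a; symmetry; apply Cmult_0_l).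
    exact (is_RInt_gen_zero (V := C_R_NormedModule)).
  - destruct (is_RInt_gen_ee_mul_fourier psi v Hd Hs (HL v (in_eq v L))) as [y1 H1].
    destruct (IH (fun w Hw => HL w (in_cons v w L Hw))) as [y2 H2].
    exists (y1 + y2).
    replace ((0, y1 + y2) : C) with (plus ((0, y1) : C) ((0, y2) : C))
      by (apply injective_projections; simpl; ring).
    assert (E : (fun a => Cmult (expsum (v :: L) a) (fourier psi a)) = 
      (fun a => plus (Cmult (ee (a * v)) (fourier psi a)) (Cmult (expsum L a) (fourier psi a))))
      by (extensionality a; rewrite expsum_cons, Cmult_plus_distr_r; reflexivity).
    rewrite E.
    exact (is_RInt_gen_plus (V := C_R_NormedModule) _ _ _ _ H1 H2).
Qed.

Definition in_Sj_range (d : nat) (P qj : R) (m : Z) : Prop :=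
  P < sqrt (Rabs qj) * IZR m < 2 * INR d * P.

Lemma Sj_expsum d P qj : exists L, (forall a, Sj d P qj a = expsum L a) /\
  forall v, In v L -> exists m, v = qj * IZR m ^ 2 /\ in_Sj_range d P qj m.
Proof.
  unfold Sj, zsum. generalize (seq 0 (2 * Z.to_nat (up (2 * INR d * P)) + 1)).
  induction l as [|n ns [L [HL HLm]]].
  - exists nil. split; [reflexivity | intros v []].
  - simpl. set (m := (Z.of_nat n - Z.of_nat (Z.to_nat (up (2 * INR d * P))))%Z).
    destruct (Rlt_dec P (sqrt (Rabs qj) * IZR m)) as [H1|H1];
      [destruct (Rlt_dec (sqrt (Rabs qj) * IZR m) (2 * INR d * P)) as [H2|H2]|].
    + exists (qj * IZR m ^ 2 :: L). split.
      * intro a. rewrite expsum_cons, HL, Rmult_assoc. reflexivity.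
      * intros v [<-|Hv]; [now exists m | now apply HLm].
    + exists L. split; [|exact HLm]. intro a. now rewrite HL, Cplus_0_l.
    + exists L. split; [|exact HLm]. intro a. now rewrite HL, Cplus_0_l.
Qed.

Lemma cprod_S k f : cprod (S k) f = Cmult (cprod k f) (f k).
Proof.
  unfold cprod. rewrite seq_S, map_app, fold_right_app. simpl.
  generalize (map f (seq 0 k)). intro l.
  induction l as [|x l IH]; simpl; [now rewrite Cmult_1_l, Cmult_1_r | now rewrite IH, Cmult_assoc].
Qed.

Lemma rsum_S k f : rsum (S k) f = rsum k f + f k.
Proof.
  unfold rsum. rewrite seq_S, map_app, fold_right_app. simpl.
  generalize (map f (seq 0 k)). intro l.
  induction l as [|x l IH]; simpl; [ring | rewrite IH; ring].
Qed.

Lemma rsum_ext k f g : (forall j, (j < k)%nat -> f j = g j) -> rsum k f = rsum k g.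
Proof.
  induction k as [|k IH]; intro H; [reflexivity|].
  rewrite !rsum_S, IH, H; auto.
Qed.

Lemma rsum_le_const k f c : (forall j, (j < k)%nat -> f j <= c) -> rsum k f <= INR k * c.
Proof.
  induction k as [|k IH]; intro H; [unfold rsum; simpl; lra|].
  rewrite rsum_S, S_INR.
  assert (rsum k f <= INR k * c) by (apply IH; intros; apply H; lia).
  assert (f k <= c) by (apply H; lia). lra.
Qed.

Lemma cprod_Sj_expsum d P (q : nat -> R) k : exists L,
  (forall a, cprod k (fun j => Sj d P (q j) a) = expsum L a) /\
  forall v, In v L -> exists m : nat -> Z,
    v = rsum k (fun j => q j * IZR (m j) ^ 2) /\
    forall j, (j < k)%nat -> in_Sj_range d P (q j) (m j).
Proof.
  induction k as [|k [L1 [H1 M1]]].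
  - exists (0 :: nil). split.
    + intro a. unfold cprod, expsum, ee. simpl.
      rewrite Rmult_0_r, Rmult_0_r, cos_0, sin_0.
      apply injective_projections; simpl; ring.
    + intros v [<-|[]]. exists (fun _ => 0%Z). split; [reflexivity | intros; lia].
  - destruct (Sj_expsum d P (q k)) as [L2 [H2 M2]].
    exists (flat_map (fun x => map (Rplus x) L2) L1). split.
    + intro a. now rewrite cprod_S, H1, H2, expsum_mul.
    + intros v Hv. apply in_flat_map in Hv. destruct Hv as [x [Hx Hy]].
      apply in_map_iff in Hy. destruct Hy as [y [<- Hy]].
      destruct (M1 x Hx) as [m [-> Hm]]. destruct (M2 y Hy) as [mk [-> Hmk]].
      exists (fun j => if Nat.eqb j k then mk else m j). split.
      * rewrite rsum_S, Nat.eqb_refl. f_equal.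
        apply rsum_ext. intros j Hj. now destruct (Nat.eqb_spec j k); [lia|].
      * intros j Hj. destruct (Nat.eqb_spec j k); [now subst | apply Hm; lia].
Qed.

Lemma zero_of_continuous_zero_outside (f : R -> R) x :
  (forall y, continuous f y) -> (forall y, 1 < Rabs y -> f y = 0) -> 1 <= Rabs x -> f x = 0.
Proof.
  intros Hc Hout Hx.
  destruct (Rle_lt_or_eq_dec _ _ Hx) as [Hlt|Heq]; [now apply Hout|].
  destruct (Req_dec (f x) 0) as [E|NE]; [exact E|exfalso].
  destruct (continuity_pt_of_continuous f x (Hc x) (Rabs (f x)) (Rabs_pos_lt _ NE))
    as [delta [Hdelta Hball]].
  assert (Hy : Rabs (x * (1 + delta / 2)) = 1 + delta / 2)
    by (rewrite Rabs_mult, <- Heq, Rabs_pos_eq; lra).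
  specialize (Hball (x * (1 + delta / 2))).
  rewrite Hout in Hball by lra.
  assert (Habs : Rabs (0 - f x) < Rabs (f x)).
  { apply Hball. split.
    - split; [exact I|]. intro E.
      assert (Rabs (x * (1 + delta / 2)) = Rabs x) by now rewrite <- E. lra.
    - change (Rabs (x * (1 + delta / 2) - x) < delta).
      replace (x * (1 + delta / 2) - x) with (x * (delta / 2)) by ring.
      rewrite Rabs_mult, <- Heq, Rabs_pos_eq; lra. }
  rewrite Rminus_0_l, Rabs_Ropp in Habs. lra.
Qed.

Lemma rsum_abs_le_of_in_Sj_range d P (q : nat -> R) (m : nat -> Z) : 0 < P ->
  (forall j, (j < d)%nat -> in_Sj_range d P (q j) (m j)) ->
  rsum d (fun j => Rabs (q j) * IZR (m j) ^ 2) <= 4 * INR d ^ 3 * P ^ 2.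
Proof.
  intros HP Hm.
  replace (4 * INR d ^ 3 * P ^ 2) with (INR d * (2 * INR d * P) ^ 2) by ring.
  apply rsum_le_const. intros j Hj. destruct (Hm j Hj) as [Hlo Hhi].
  rewrite <- (sqrt_sqrt (Rabs (q j))) by apply Rabs_pos.
  replace (sqrt (Rabs (q j)) * sqrt (Rabs (q j)) * IZR (m j) ^ 2)
    with ((sqrt (Rabs (q j)) * IZR (m j)) ^ 2) by ring.
  apply pow_incr. lra.
Qed.

Theorem lemma2p2 (d : nat) (q : nat -> R) (Cd : R) (psi : R -> R) :
  (5 <= d)%nat ->
  (forall j, (j < d)%nat -> q j <> 0) ->
  (forall j, (j < d)%nat -> exp (exp 1) <= Rabs (q j)) ->
  (* indefinite signature (r, s) with r, s >= 1, as in the definition of beta *)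
  (1 <= npos d q)%nat -> (1 <= nneg d q)%nat ->
  1 <= Cd ->
  (* psi smooth, symmetric probability density supported in [-1, 1] *)
  (forall n x, ex_derive_n psi n x) ->
  (forall x, psi (- x) = psi x) ->
  (forall x, 0 <= psi x) ->
  (forall x, 1 < Rabs x -> psi x = 0) ->
  is_RInt_gen psi (Rbar_locally m_infty) (Rbar_locally p_infty) 1 ->
  (* no nontrivial small solution of |Q(m)| < 1 *)
  (~ exists m : nat -> Z,
       (exists j, (j < d)%nat /\ m j <> 0%Z) /\
       Rabs (rsum d (fun j => q j * IZR (m j) ^ 2)) < 1 /\
       rsum d (fun j => Rabs (q j) * IZR (m j) ^ 2)
         <= 4 * INR d ^ 3 * (Ppar d Cd q) ^ 2) ->
  Re (@RInt_gen C_R_CompleteNormedModule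
        (fun a => Cmult (cprod d (fun j => Sj d (Ppar d Cd q) (q j) a))
                        (fourier psi a))
        (at_point 0) (Rbar_locally p_infty)) = 0.
Proof.
  intros Hd5 _ _ _ _ _ Hsmooth _ _ Hsupp _ Hno.
  assert (HP : 0 < Ppar d Cd q) by apply exp_pos.
  destruct (cprod_Sj_expsum d (Ppar d Cd q) q d) as [L [HL HLm]].
  assert (HL0 : forall v, In v L -> psi v = 0).
  { intros v Hv. destruct (HLm v Hv) as [m [-> Hm]].
    apply zero_of_continuous_zero_outside; [|exact Hsupp|].
    - intro x. exact (continuous_of_is_derive _ _ _ (Derive_correct _ _ (Hsmooth 1%nat x))).
    - apply Rnot_lt_le. intro Hsmall. apply Hno. exists m. split; [|split; [exact Hsmall|]].
      + exists 0%nat. split; [lia|]. intro E. destruct (Hm 0%nat ltac:(lia)) as [Hlo _].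
        rewrite E, Rmult_0_r in Hlo. lra.
      + now apply rsum_abs_le_of_in_Sj_range. }
  destruct (is_RInt_gen_expsum_mul_fourier psi L Hsmooth Hsupp HL0) as [y Hy].
  replace (fun a => Cmult (cprod d (fun j => Sj d (Ppar d Cd q) (q j) a)) (fourier psi a))
    with (fun a => Cmult (expsum L a) (fourier psi a)) by (extensionality a; now rewrite HL).
  now rewrite (is_RInt_gen_unique (V := C_R_CompleteNormedModule) _ _ Hy).
Qed.
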